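(* There is $R_1\in(0,\frac12\sqrt{\frac{3}{8\pi}})$ such that for all $0<R<R_1$ and all $(m_1,\rho_1),(m_2,\rho_2)\in\mathcal{C}^0_R$, $$\|T[m_1,\rho_1]-T[m_2,\rho_2]\|\le\frac34\,\|(m_1-m_2,\rho_1-\rho_2)\|.$$
   Context: Let $\rho_*(R)=\frac{16\pi}{3}R^2$ and $\mathcal{C}^0_R=\{(m,\rho):[0,R]\to\mathbb{R}^2 \text{ continuous}:\ 0\le m(r)\le \frac{4\pi}{3}\rho_*(R)r^3,\ 0\le\rho(r)\le\rho_*(R)\}$, with norm $\|(m,\rho)\|=\frac{3}{4\pi}\|m/r^3\|_{L^\infty}+2\|\rho\|_{L^\infty}$. Define $T[m,\rho]=(M[\rho],P[m,\rho])$ with $M[\rho](r)=\int_0^r 4\pi s^2\rho(s)\,ds$ and $P[m,\rho](r)=\int_r^R \frac{1+2\rho(s)}{1-\frac{8\pi}{3}s^2-\frac{2m(s)}{s}}\,\frac{4\pi s}{3}\Big[1+3\rho(s)+\frac{3m(s)}{4\pi s^3}\Big]ds$. *)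

From Stdlib Require Import Reals Lra ClassicalEpsilon.
Open Scope R_scope.

(* Total Riemann integral: value of the Riemann integral of f on [a,b]
   when f is Riemann integrable there, 0 otherwise. *)
Definition Rint (f : R -> R) (a b : R) : R :=
  match excluded_middle_informative
          (exists l, exists pr : Riemann_integrable f a b, RiemannInt pr = l) with
  | left H => proj1_sig (constructive_indefinite_description _ H)
  | right _ => 0
  end.

(* sup of |f| over the set D (least upper bound if it exists, else 0). *)
Definition sup_abs (D : R -> Prop) (f : R -> R) : R :=
  match excluded_middle_informative
          (exists l, is_lub (fun y => exists r, D r /\ y = Rabs (f r)) l) with
  | left H => proj1_sig (constructive_indefinite_description _ H)
  | right _ => 0
  end.

Definition continuous_on (a b : R) (f : R -> R) : Prop :=
  forall x, a <= x <= b -> forall eps, 0 < eps -> exists delta, 0 < delta /\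
    forall y, a <= y <= b -> Rabs (y - x) < delta -> Rabs (f y - f x) < eps.

Definition rho_star (R0 : R) : R := 16 * PI / 3 * R0 ^ 2.

Definition inC (R0 : R) (m rho : R -> R) : Prop :=
  continuous_on 0 R0 m /\ continuous_on 0 R0 rho /\
  forall r, 0 <= r <= R0 ->
    0 <= m r <= 4 * PI / 3 * rho_star R0 * r ^ 3 /\ 0 <= rho r <= rho_star R0.

Definition normC (R0 : R) (m rho : R -> R) : R :=
  3 / (4 * PI) * sup_abs (fun r => 0 < r <= R0) (fun r => m r / r ^ 3)
  + 2 * sup_abs (fun r => 0 <= r <= R0) rho.

Definition Mop (rho : R -> R) (r : R) : R :=
  Rint (fun s => 4 * PI * s ^ 2 * rho s) 0 r.

Definition Pop (R0 : R) (m rho : R -> R) (r : R) : R :=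
  Rint (fun s => (1 + 2 * rho s) / (1 - 8 * PI / 3 * s ^ 2 - 2 * m s / s)
                 * (4 * PI * s / 3)
                 * (1 + 3 * rho s + 3 * m s / (4 * PI * s ^ 3))) r R0.

(* In terms of [u = m / s^3] and [rho], which are both O(R^2) on [C^0_R], the integrand of
   [Pop] is [s] times a rational function of [(s, rho, u)] that is bounded and Lipschitz
   near the origin; hence [Pop] moves by at most [R^2] times the distance of the data.
   The integrand of [Mop] is [4 PI s^2 rho], so [|Mop rho1 - Mop rho2| / r^3] is at most
   [4 PI / 3] times the sup of [|rho1 - rho2|]: after the weight [3 / (4 PI)] of the norm the
   mass component contributes exactly that sup, half of the density part of the norm.
   Taking [R1 = 1/200] the pressure contribution is small enough to keep the total below [3/4]. *)

From Pilot Require Import Defs.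
From Stdlib Require Import Reals Lra Psatz ClassicalEpsilon.
From Coquelicot Require Import Coquelicot.
Open Scope R_scope.

Lemma Rint_RInt f a b : ex_RInt f a b -> Rint f a b = RInt f a b.
Proof.
  intros Hex; pose proof (ex_RInt_Reals_0 _ _ _ Hex) as pr.
  unfold Rint; destruct (excluded_middle_informative _) as [H|H].
  - destruct (constructive_indefinite_description _ H) as [l [pr' <-]]; simpl.
    symmetry; apply RInt_Reals.
  - exfalso; apply H; exists (RiemannInt pr), pr; reflexivity.
Qed.

Lemma abs_Rint_sub_le f1 f2 G a b I : a <= b -> ex_RInt f1 a b -> ex_RInt f2 a b ->
  is_RInt G a b I -> (forall x, a <= x <= b -> Rabs (f1 x - f2 x) <= G x) ->
  Rabs (Rint f1 a b - Rint f2 a b) <= I.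
Proof.
  intros Hab E1 E2 HG H; rewrite !Rint_RInt by assumption.
  apply (norm_RInt_le (fun x => f1 x - f2 x) G a b _ _ Hab H); [|exact HG].
  apply (is_RInt_minus (V := R_NormedModule)); apply (RInt_correct (V := R_CompleteNormedModule)); assumption.
Qed.

Lemma sup_abs_le D f K : 0 <= K -> (forall r, D r -> Rabs (f r) <= K) -> sup_abs D f <= K.
Proof.
  intros HK H; unfold sup_abs; destruct (excluded_middle_informative _) as [E|E]; [|exact HK].
  destruct (constructive_indefinite_description _ E) as [l Hl]; simpl.
  apply Hl; intros y [r [Dr ->]]; auto.
Qed.

Lemma Rabs_le_sup_abs D f K r : D r -> (forall r, D r -> Rabs (f r) <= K) ->
  Rabs (f r) <= sup_abs D f.
Proof.
  intros Dr H; unfold sup_abs; destruct (excluded_middle_informative _) as [E|E].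
  - destruct (constructive_indefinite_description _ E) as [l Hl]; simpl.
    apply Hl; exists r; auto.
  - exfalso; apply E.
    destruct (completeness (fun y => exists r, D r /\ y = Rabs (f r))) as [l Hl].
    + exists K; intros y [r' [Dr' ->]]; auto.
    + exists (Rabs (f r)), r; auto.
    + exists l; exact Hl.
Qed.

Lemma continuous_Rmult (f g : R -> R) x :
  continuous f x -> continuous g x -> continuous (fun y => f y * g y) x.
Proof. apply (continuous_mult f g x). Qed.

Lemma continuous_Rplus (f g : R -> R) x :
  continuous f x -> continuous g x -> continuous (fun y => f y + g y) x.
Proof. apply (continuous_plus f g x). Qed.

Lemma continuous_Rminus (f g : R -> R) x :
  continuous f x -> continuous g x -> continuous (fun y => f y - g y) x.
Proof. apply (continuous_minus f g x). Qed.

Lemma continuous_Rdiv (f g : R -> R) x :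
  continuous f x -> continuous g x -> g x <> 0 -> continuous (fun y => f y / g y) x.
Proof. intros; apply continuous_Rmult; [|apply continuous_Rinv_comp]; assumption. Qed.

Lemma continuous_Rpow (f : R -> R) n x : continuous f x -> continuous (fun y => f y ^ n) x.
Proof.
  intros Hf; induction n as [|n IH]; simpl; [apply continuous_const | apply continuous_Rmult; assumption].
Qed.

Ltac solve_continuous := repeat match goal with
  | |- continuous (fun _ => ?c) _ => apply continuous_const
  | |- continuous (fun y => y) _ => apply continuous_id
  | |- continuous (fun y => @?f y / @?g y) _ => apply (continuous_Rdiv f g)
  | |- continuous (fun y => @?f y * @?g y) _ => apply (continuous_Rmult f g)
  | |- continuous (fun y => @?f y + @?g y) _ => apply (continuous_Rplus f g)
  | |- continuous (fun y => @?f y - @?g y) _ => apply (continuous_Rminus f g)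
  | |- continuous (fun y => @?f y ^ ?n) _ => apply (continuous_Rpow f n)
  | |- continuous _ _ => assumption
  end.

Lemma is_RInt_scal_sq c r : is_RInt (fun x => c * x ^ 2) 0 r (c * r ^ 3 / 3).
Proof.
  replace (c * r ^ 3 / 3) with (minus (c * r ^ 3 / 3) (c * 0 ^ 3 / 3))
    by (unfold minus, plus, opp; simpl; field).
  apply (is_RInt_derive (V := R_CompleteNormedModule) (fun x => c * x ^ 3 / 3)).
  - intros x _; auto_derive; [exact I | field].
  - intros x _; solve_continuous.
Qed.

Section Clamp.
Variable R0 : R.
Hypothesis HR0 : 0 <= R0.

(* Projection onto [0, R0]: functions continuous on [0, R0] become continuous on R after
   composing with it, which gives access to Coquelicot's integrability criteria. *)
Definition clamp x := Rmax 0 (Rmin x R0).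

Lemma clamp_in x : 0 <= clamp x <= R0.
Proof. unfold clamp, Rmax, Rmin; repeat destruct Rle_dec; lra. Qed.

Lemma clamp_id x : 0 <= x <= R0 -> clamp x = x.
Proof. unfold clamp, Rmax, Rmin; repeat destruct Rle_dec; lra. Qed.

Lemma clamp_nonpos x : x <= 0 -> clamp x = 0.
Proof. unfold clamp, Rmax, Rmin; repeat destruct Rle_dec; lra. Qed.

Lemma clamp_Lipschitz x y : Rabs (clamp y - clamp x) <= Rabs (y - x).
Proof. unfold clamp, Rmax, Rmin, Rabs; repeat destruct Rle_dec; repeat destruct Rcase_abs; lra. Qed.

Lemma continuous_comp_clamp u : Defs.continuous_on 0 R0 u -> forall x, continuous (fun y => u (clamp y)) x.
Proof.
  intros Hu x; apply continuity_pt_filterlim.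
  unfold continuity_pt, continue_in, limit1_in, limit_in; simpl; unfold R_dist.
  intros eps Heps; destruct (Hu (clamp x) (clamp_in x) eps Heps) as [d [Hd Hy]].
  exists d; split; [exact Hd|]; intros y [_ Hyx].
  apply Hy; [apply clamp_in | eapply Rle_lt_trans; [apply clamp_Lipschitz | exact Hyx]].
Qed.

Lemma continuous_clamp x : continuous clamp x.
Proof.
  apply (continuous_comp_clamp (fun y => y)).
  intros z _ eps Heps; exists eps; split; [exact Heps | auto].
Qed.

Lemma ex_RInt_clamp (f : R -> R) a b : 0 <= a <= b -> b <= R0 ->
  (forall x, continuous (fun y => f (clamp y)) x) -> ex_RInt f a b.
Proof.
  intros Hab HbR Hf; apply (ex_RInt_ext (fun y => f (clamp y))).
  - intros x Hx; rewrite Rmin_left, Rmax_right in Hx by lra; rewrite clamp_id; [reflexivity | lra].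
  - apply (ex_RInt_continuous (V := R_CompleteNormedModule)); auto.
Qed.

End Clamp.

Lemma clamp_pos R0 x : 0 < R0 -> 0 < x -> 0 < clamp R0 x.
Proof. unfold clamp, Rmax, Rmin; repeat destruct Rle_dec; lra. Qed.

Definition pressure_kernel p s r u :=
  (1 + 2 * r) * (4 * p / 3 * (1 + 3 * r) + u) / (1 - (8 * p / 3 + 2 * u) * s ^ 2).

Section PressureKernel.
Variable p : R.
Hypothesis Hp : 3 < p <= 4.

Lemma pressure_denom_bounds s u : 0 <= s <= 1/100 -> 0 <= u <= 1/100 ->
  99/100 <= 1 - (8 * p / 3 + 2 * u) * s ^ 2 <= 1.
Proof. intros Hs Hu; assert (0 <= s ^ 2 <= 1/10000) by (split; nra); split; nra. Qed.

Lemma pressure_numer_bounds r u : 0 <= r <= 1/100 -> 0 <= u <= 1/100 ->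
  0 <= (1 + 2 * r) * (4 * p / 3 * (1 + 3 * r) + u) <= 7.
Proof. intros; split; nra. Qed.

Lemma Rabs_pressure_kernel_le s r u :
  0 <= s <= 1/100 -> 0 <= r <= 1/100 -> 0 <= u <= 1/100 ->
  Rabs (pressure_kernel p s r u) <= 10.
Proof.
  intros Hs Hr Hu.
  pose proof (pressure_denom_bounds s u Hs Hu); pose proof (pressure_numer_bounds r u Hr Hu).
  unfold pressure_kernel, Rdiv; rewrite Rabs_mult, Rabs_inv, !Rabs_pos_eq by lra.
  apply Rle_trans with (7 * / (99/100)); [|lra].
  apply Rmult_le_compat; try lra; [left; apply Rinv_0_lt_compat; lra | apply Rinv_le_contravar; lra].
Qed.

Lemma pressure_kernel_Lipschitz s r1 u1 r2 u2 : 0 <= s <= 1/100 ->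
  0 <= r1 <= 1/100 -> 0 <= u1 <= 1/100 -> 0 <= r2 <= 1/100 -> 0 <= u2 <= 1/100 ->
  Rabs (pressure_kernel p s r1 u1 - pressure_kernel p s r2 u2)
    <= 40 * Rabs (r1 - r2) + 2 * Rabs (u1 - u2).
Proof.
  intros Hs Hr1 Hu1 Hr2 Hu2.
  pose proof (pressure_denom_bounds s u1 Hs Hu1) as HD1.
  pose proof (pressure_denom_bounds s u2 Hs Hu2) as HD2.
  pose proof (pressure_numer_bounds r2 u2 Hr2 Hu2) as HP2.
  assert (Hs2 : 0 <= s ^ 2 <= 1/10000) by (split; nra).
  set (D1 := 1 - (8 * p / 3 + 2 * u1) * s ^ 2) in *.
  set (D2 := 1 - (8 * p / 3 + 2 * u2) * s ^ 2) in *.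
  set (P2 := (1 + 2 * r2) * (4 * p / 3 * (1 + 3 * r2) + u2)) in *.
  set (A := (4 * p / 3 * (5 + 6 * (r1 + r2)) + 2 * u2) * D2).
  set (B := (1 + 2 * r1) * D2 + 2 * P2 * s ^ 2).
  assert (HA : 0 <= A <= 28).
  { assert (0 <= 4 * p / 3 * (5 + 6 * (r1 + r2)) + 2 * u2 <= 28) by (split; nra).
    unfold A; split; nra. }
  assert (HB : 0 <= B <= 11/10) by (unfold B; split; nra).
  assert (E : pressure_kernel p s r1 u1 - pressure_kernel p s r2 u2
              = ((r1 - r2) * A + (u1 - u2) * B) / (D1 * D2)).
  { unfold pressure_kernel, A, B, P2, D1, D2 in *; field; lra. }
  rewrite E; unfold Rdiv; rewrite Rabs_mult, Rabs_inv, (Rabs_pos_eq (D1 * D2)) by nra.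
  pose proof (Rabs_pos (r1 - r2)); pose proof (Rabs_pos (u1 - u2)).
  apply Rle_trans with ((28 * Rabs (r1 - r2) + 11/10 * Rabs (u1 - u2)) * / (98/100)); [|lra].
  apply Rmult_le_compat; try (apply Rabs_pos || (left; apply Rinv_0_lt_compat; nra)).
  - eapply Rle_trans; [apply Rabs_triang|]; rewrite !Rabs_mult, (Rabs_pos_eq A), (Rabs_pos_eq B) by lra.
    nra.
  - apply Rinv_le_contravar; nra.
Qed.
End PressureKernel.

Lemma PI_bounds : 3 < PI <= 4.
Proof. pose proof PI2_3_2; pose proof PI_4; lra. Qed.

Lemma half_sqrt_3_8PI_gt : 1/200 < / 2 * sqrt (3 / (8 * PI)).
Proof.
  pose proof PI_bounds.
  assert (Hs : sqrt ((1/100) ^ 2) = 1/100) by (apply sqrt_pow2; lra).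
  assert (Hlt : (1/100) ^ 2 < 3 / (8 * PI)).
  { apply Rmult_lt_reg_r with (8 * PI); [lra|].
    replace (3 / (8 * PI) * (8 * PI)) with 3 by (field; lra); lra. }
  pose proof (sqrt_lt_1_alt _ _ (conj (pow2_ge_0 _) Hlt)); lra.
Qed.

Definition mass_integrand (rho : R -> R) s := 4 * PI * s ^ 2 * rho s.

Definition pressure_integrand (m rho : R -> R) s :=
  (1 + 2 * rho s) / (1 - 8 * PI / 3 * s ^ 2 - 2 * m s / s) * (4 * PI * s / 3)
  * (1 + 3 * rho s + 3 * m s / (4 * PI * s ^ 3)).

Lemma pressure_integrand_0 m rho : pressure_integrand m rho 0 = 0.
Proof. unfold pressure_integrand; replace (4 * PI * 0 / 3) with 0 by field; ring. Qed.

(* With [u = m s / s^3] the apparent singularity at [s = 0] disappears. *)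
Lemma pressure_integrand_kernel m rho s : 0 < s <= 1/100 -> 0 <= m s / s ^ 3 <= 1/100 ->
  pressure_integrand m rho s = s * pressure_kernel PI s (rho s) (m s / s ^ 3).
Proof.
  intros Hs Hu; pose proof PI_bounds.
  set (u := m s / s ^ 3) in *.
  pose proof (pressure_denom_bounds PI PI_bounds s u ltac:(lra) Hu).
  assert (Em : m s = u * s ^ 3) by (unfold u; field; lra).
  unfold pressure_integrand, pressure_kernel; rewrite Em.
  replace (2 * (u * s ^ 3) / s) with (2 * u * s ^ 2) by (field; lra).
  field; repeat split; lra.
Qed.

Section SmallRadius.
Variable R0 : R.
Hypothesis HR0 : 0 < R0 <= 1/200.

Lemma inC_density_small m rho s : inC R0 m rho -> 0 <= s <= R0 -> 0 <= rho s <= 1/100.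
Proof.
  intros [_ [_ H]] Hs; destruct (H s Hs) as [_ Hr]; pose proof PI_bounds.
  unfold rho_star in Hr; assert (R0 ^ 2 <= 1/40000) by nra; nra.
Qed.

Lemma inC_mass_ratio_small m rho s : inC R0 m rho -> 0 < s <= R0 -> 0 <= m s / s ^ 3 <= 1/100.
Proof.
  intros [_ [_ H]] Hs; destruct (H s ltac:(lra)) as [Hm _]; pose proof PI_bounds.
  assert (Hstar : 4 * PI / 3 * rho_star R0 <= 1/100).
  { unfold rho_star; assert (R0 ^ 2 <= 1/40000) by nra; nra. }
  assert (Hs3 : 0 < s ^ 3) by (apply pow_lt; lra).
  split.
  - apply Rmult_le_pos; [lra | left; apply Rinv_0_lt_compat; lra].
  - apply Rmult_le_reg_r with (s ^ 3); [lra|].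
    unfold Rdiv; rewrite Rmult_assoc, Rinv_l by lra; nra.
Qed.

Lemma Rabs_pressure_integrand_le m rho s : inC R0 m rho -> 0 <= s <= R0 ->
  Rabs (pressure_integrand m rho s) <= 10 * s.
Proof.
  intros HC Hs; destruct (Req_dec s 0) as [->|Hs0].
  - rewrite pressure_integrand_0, Rabs_R0; lra.
  - pose proof (inC_mass_ratio_small m rho s HC ltac:(lra)) as Hu.
    pose proof (inC_density_small m rho s HC ltac:(lra)) as Hr.
    rewrite pressure_integrand_kernel, Rabs_mult, Rabs_pos_eq by lra.
    pose proof (Rabs_pressure_kernel_le PI PI_bounds s _ _ ltac:(lra) Hr Hu); nra.
Qed.

Lemma pressure_integrand_sub_le m1 rho1 m2 rho2 a b s :
  inC R0 m1 rho1 -> inC R0 m2 rho2 -> 0 <= a -> 0 <= b -> 0 <= s <= R0 ->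
  Rabs (rho1 s - rho2 s) <= b -> (0 < s -> Rabs ((m1 s - m2 s) / s ^ 3) <= a) ->
  Rabs (pressure_integrand m1 rho1 s - pressure_integrand m2 rho2 s) <= R0 * (40 * b + 2 * a).
Proof.
  intros H1 H2 Ha Hb Hs Hrb Hma.
  destruct (Req_dec s 0) as [->|Hs0].
  - rewrite !pressure_integrand_0, Rminus_0_r, Rabs_R0; apply Rmult_le_pos; lra.
  - pose proof (inC_mass_ratio_small m1 rho1 s H1 ltac:(lra)) as Hu1.
    pose proof (inC_density_small m1 rho1 s H1 ltac:(lra)) as Hr1.
    pose proof (inC_mass_ratio_small m2 rho2 s H2 ltac:(lra)) as Hu2.
    pose proof (inC_density_small m2 rho2 s H2 ltac:(lra)) as Hr2.
    rewrite !pressure_integrand_kernel by lra.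
    rewrite <- Rmult_minus_distr_l, Rabs_mult, (Rabs_pos_eq s) by lra.
    pose proof (pressure_kernel_Lipschitz PI PI_bounds s _ _ _ _ ltac:(lra) Hr1 Hu1 Hr2 Hu2) as HL.
    replace (m1 s / s ^ 3 - m2 s / s ^ 3) with ((m1 s - m2 s) / s ^ 3) in HL by (unfold Rdiv; ring).
    specialize (Hma ltac:(lra)).
    apply Rmult_le_compat; [lra | apply Rabs_pos | lra | lra].
Qed.

Lemma ex_RInt_mass_integrand rho r : Defs.continuous_on 0 R0 rho -> 0 <= r <= R0 ->
  ex_RInt (mass_integrand rho) 0 r.
Proof.
  intros Hc Hr; apply (ex_RInt_clamp R0); try lra; intros z.
  pose proof (continuous_comp_clamp R0 ltac:(lra) rho Hc z).
  pose proof (continuous_clamp R0 ltac:(lra) z).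
  unfold mass_integrand; solve_continuous.
Qed.

Lemma ex_RInt_pressure_integrand m rho r : inC R0 m rho -> 0 <= r <= R0 ->
  ex_RInt (pressure_integrand m rho) r R0.
Proof.
  intros HC Hr; apply (ex_RInt_clamp R0); try lra; intros z.
  destruct (Rle_dec z 0) as [Hz|Hz].
  - (* the integrand vanishes linearly at the origin *)
    apply continuity_pt_filterlim.
    unfold continuity_pt, continue_in, limit1_in, limit_in; simpl; unfold R_dist.
    intros eps Heps; exists (eps / 10); split; [lra|]; intros y [_ Hy].
    rewrite (clamp_nonpos R0 ltac:(lra) z) by lra; rewrite pressure_integrand_0, Rminus_0_r.
    pose proof (clamp_in R0 ltac:(lra) y) as Hin.
    pose proof (clamp_Lipschitz R0 ltac:(lra) z y) as HL.
    rewrite (clamp_nonpos R0 ltac:(lra) z), Rminus_0_r, Rabs_pos_eq in HL by lra.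
    eapply Rle_lt_trans; [apply Rabs_pressure_integrand_le; assumption | lra].
  - pose proof HC as [Hm [Hrho _]].
    pose proof (continuous_comp_clamp R0 ltac:(lra) m Hm z).
    pose proof (continuous_comp_clamp R0 ltac:(lra) rho Hrho z).
    pose proof (continuous_clamp R0 ltac:(lra) z).
    pose proof (clamp_in R0 ltac:(lra) z).
    pose proof (clamp_pos R0 z ltac:(lra) ltac:(lra)).
    set (c := clamp R0 z) in *.
    pose proof (inC_mass_ratio_small m rho c HC ltac:(lra)) as Hu.
    pose proof PI_bounds.
    pose proof (pressure_denom_bounds PI PI_bounds c _ ltac:(lra) Hu).
    assert (0 < c ^ 3) by (apply pow_lt; lra).
    assert (1 - 8 * PI / 3 * c ^ 2 - 2 * m c / c = 1 - (8 * PI / 3 + 2 * (m c / c ^ 3)) * c ^ 2)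
      by (field; lra).
    unfold pressure_integrand; solve_continuous; fold c; nra.
Qed.

Lemma Mop_sub_le rho1 rho2 b r :
  Defs.continuous_on 0 R0 rho1 -> Defs.continuous_on 0 R0 rho2 ->
  (forall s, 0 <= s <= R0 -> Rabs (rho1 s - rho2 s) <= b) -> 0 < r <= R0 ->
  Rabs (Mop rho1 r - Mop rho2 r) <= 4 * PI / 3 * r ^ 3 * b.
Proof.
  intros C1 C2 Hb Hr; pose proof PI_bounds.
  replace (4 * PI / 3 * r ^ 3 * b) with (4 * PI * b * r ^ 3 / 3) by field.
  apply (abs_Rint_sub_le _ _ (fun x => 4 * PI * b * x ^ 2)); try lra.
  - apply ex_RInt_mass_integrand; [exact C1 | lra].
  - apply ex_RInt_mass_integrand; [exact C2 | lra].
  - apply is_RInt_scal_sq.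
  - intros x Hx; unfold mass_integrand.
    replace (4 * PI * x ^ 2 * rho1 x - 4 * PI * x ^ 2 * rho2 x)
      with (4 * PI * x ^ 2 * (rho1 x - rho2 x)) by ring.
    rewrite Rabs_mult, Rabs_pos_eq by (pose proof (pow2_ge_0 x); nra).
    replace (4 * PI * b * x ^ 2) with (4 * PI * x ^ 2 * b) by ring.
    apply Rmult_le_compat_l; [pose proof (pow2_ge_0 x); nra | apply Hb; lra].
Qed.

Lemma Pop_sub_le m1 rho1 m2 rho2 a b r :
  inC R0 m1 rho1 -> inC R0 m2 rho2 -> 0 <= a -> 0 <= b ->
  (forall s, 0 <= s <= R0 -> Rabs (rho1 s - rho2 s) <= b) ->
  (forall s, 0 < s <= R0 -> Rabs ((m1 s - m2 s) / s ^ 3) <= a) -> 0 <= r <= R0 ->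
  Rabs (Pop R0 m1 rho1 r - Pop R0 m2 rho2 r) <= R0 ^ 2 * (40 * b + 2 * a).
Proof.
  intros H1 H2 Ha Hb Hrb Hma Hr.
  apply Rle_trans with ((R0 - r) * (R0 * (40 * b + 2 * a))).
  - apply (abs_Rint_sub_le _ _ (fun _ => R0 * (40 * b + 2 * a))); try lra.
    + apply ex_RInt_pressure_integrand; assumption.
    + apply ex_RInt_pressure_integrand; assumption.
    + apply (is_RInt_const (V := R_NormedModule)).
    + intros s Hs; apply pressure_integrand_sub_le; auto; [lra | apply Hrb; lra | intros; apply Hma; lra].
  - replace (R0 ^ 2 * (40 * b + 2 * a)) with (R0 * (R0 * (40 * b + 2 * a))) by ring.
    apply Rmult_le_compat_r; [apply Rmult_le_pos |]; lra.
Qed.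

Lemma Rabs_mass_ratio_sub_le_sup m1 rho1 m2 rho2 :
  inC R0 m1 rho1 -> inC R0 m2 rho2 -> forall s, 0 < s <= R0 ->
  Rabs ((m1 s - m2 s) / s ^ 3)
    <= sup_abs (fun r => 0 < r <= R0) (fun r => (m1 r - m2 r) / r ^ 3).
Proof.
  intros H1 H2 s Hs; apply (Rabs_le_sup_abs _ (fun r => (m1 r - m2 r) / r ^ 3) (1/100) s Hs).
  intros r Hr; pose proof (inC_mass_ratio_small m1 rho1 r H1 Hr).
  pose proof (inC_mass_ratio_small m2 rho2 r H2 Hr).
  replace ((m1 r - m2 r) / r ^ 3) with (m1 r / r ^ 3 - m2 r / r ^ 3) by (unfold Rdiv; ring).
  apply Rabs_le; lra.
Qed.

Lemma Rabs_density_sub_le_sup m1 rho1 m2 rho2 :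
  inC R0 m1 rho1 -> inC R0 m2 rho2 -> forall s, 0 <= s <= R0 ->
  Rabs (rho1 s - rho2 s) <= sup_abs (fun r => 0 <= r <= R0) (fun r => rho1 r - rho2 r).
Proof.
  intros H1 H2 s Hs; apply (Rabs_le_sup_abs _ (fun r => rho1 r - rho2 r) (1/100) s Hs).
  intros r Hr; pose proof (inC_density_small m1 rho1 r H1 Hr).
  pose proof (inC_density_small m2 rho2 r H2 Hr).
  apply Rabs_le; lra.
Qed.

Lemma weighted_sup_Mop_sub_le rho1 rho2 b :
  Defs.continuous_on 0 R0 rho1 -> Defs.continuous_on 0 R0 rho2 -> 0 <= b ->
  (forall s, 0 <= s <= R0 -> Rabs (rho1 s - rho2 s) <= b) ->
  3 / (4 * PI) * sup_abs (fun r => 0 < r <= R0) (fun r => (Mop rho1 r - Mop rho2 r) / r ^ 3) <= b.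
Proof.
  intros C1 C2 Hb0 Hb; pose proof PI_bounds.
  apply Rle_trans with (3 / (4 * PI) * (4 * PI / 3 * b)); [|right; field; lra].
  apply Rmult_le_compat_l; [apply Rlt_le, Rdiv_lt_0_compat; lra|].
  apply sup_abs_le; [apply Rmult_le_pos; lra|]; intros r Hr.
  assert (0 < r ^ 3) by (apply pow_lt; lra).
  pose proof (Mop_sub_le rho1 rho2 b r C1 C2 Hb Hr).
  unfold Rdiv; rewrite Rabs_mult, Rabs_inv, (Rabs_pos_eq (r ^ 3)) by lra.
  apply Rmult_le_reg_r with (r ^ 3); [lra|]; rewrite Rmult_assoc, Rinv_l by lra; lra.
Qed.

End SmallRadius.

Theorem mainTheorem3 :
  exists R1 : R, 0 < R1 < / 2 * sqrt (3 / (8 * PI)) /\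
    forall R0 : R, 0 < R0 < R1 ->
    forall m1 rho1 m2 rho2 : R -> R,
      inC R0 m1 rho1 -> inC R0 m2 rho2 ->
      normC R0 (fun r => Mop rho1 r - Mop rho2 r)
               (fun r => Pop R0 m1 rho1 r - Pop R0 m2 rho2 r)
      <= 3 / 4 * normC R0 (fun r => m1 r - m2 r) (fun r => rho1 r - rho2 r).
Proof.
  exists (1/200); split; [split; [lra | apply half_sqrt_3_8PI_gt] |].
  intros R0 HR0 m1 rho1 m2 rho2 H1 H2.
  assert (HR : 0 < R0 <= 1/200) by lra.
  unfold normC; cbv beta.
  pose proof (Rabs_mass_ratio_sub_le_sup R0 HR m1 rho1 m2 rho2 H1 H2) as Ha.
  pose proof (Rabs_density_sub_le_sup R0 HR m1 rho1 m2 rho2 H1 H2) as Hb.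
  set (a := sup_abs _ (fun r => (m1 r - m2 r) / r ^ 3)) in *.
  set (b := sup_abs _ (fun r => rho1 r - rho2 r)) in *.
  assert (Ha0 : 0 <= a) by (eapply Rle_trans; [apply Rabs_pos | apply (Ha R0); lra]).
  assert (Hb0 : 0 <= b) by (eapply Rle_trans; [apply Rabs_pos | apply (Hb R0); lra]).
  assert (HM := weighted_sup_Mop_sub_le R0 HR rho1 rho2 b
                  (proj1 (proj2 H1)) (proj1 (proj2 H2)) Hb0 Hb).
  assert (HP : sup_abs (fun r => 0 <= r <= R0) (fun r => Pop R0 m1 rho1 r - Pop R0 m2 rho2 r)
               <= R0 ^ 2 * (40 * b + 2 * a)).
  { apply sup_abs_le; [nra|]; intros r Hr; apply Pop_sub_le; auto. }
  pose proof PI_bounds.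
  assert (3/16 <= 3 / (4 * PI)).
  { apply Rmult_le_reg_r with (4 * PI); [lra|].
    replace (3 / (4 * PI) * (4 * PI)) with 3 by (field; lra); lra. }
  assert (R0 ^ 2 <= 1/40000) by nra.
  nra.
Qed.
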